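(* Let $N\ge 1$ and let $\mathbf{Z}_{\mathrm{SS}}\in\mathbb{C}^{N\times N}$, $z_{\mathrm{G}},z_{\mathrm{L}},z_{\mathrm{TT}},z_{\mathrm{RR}},z_{\mathrm{TR}}\in\mathbb{C}$, row vectors $\mathbf{z}_{\mathrm{TS}},\mathbf{z}_{\mathrm{RS}}\in\mathbb{C}^{1\times N}$ and column vectors $\mathbf{z}_{\mathrm{ST}},\mathbf{z}_{\mathrm{SR}}\in\mathbb{C}^{N\times 1}$ be fixed, and let $R_0\ge 0$. For a real vector $\mathbf{z}_{\mathrm{RIS,Im}}\in\mathbb{R}^{N}$ put $\mathbf{z}_{\mathrm{RIS}}=R_0\mathbf{1}+j\,\mathbf{z}_{\mathrm{RIS,Im}}\in\mathbb{C}^N$ (so every entry of $\mathbf{z}_{\mathrm{RIS}}$ has real part $R_0$) and $$\mathbf{Z}_{\mathrm{SE}}=\mathbf{Z}_{\mathrm{SS}}+\mathrm{diag}(\mathbf{z}_{\mathrm{RIS}}),$$ $$\phi_{\mathrm{KL}}=z_{\mathrm{KL}}-\mathbf{z}_{\mathrm{KS}}\mathbf{Z}_{\mathrm{SE}}^{-1}\mathbf{z}_{\mathrm{SL}},\quad \mathrm{K},\mathrm{L}\in\{\mathrm{T},\mathrm{R}\},$$ $$\tilde{z}_{\mathrm{T}}=z_{\mathrm{G}}+\phi_{\mathrm{TT}},\qquad \tilde{z}_{\mathrm{R}}=z_{\mathrm{L}}+\phi_{\mathrm{RR}},\qquad a=\bigl(\tilde{z}_{\mathrm{T}}\tilde{z}_{\mathrm{R}}-\phi_{\mathrm{TR}}^{2}\bigr)^{-1},$$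 $$h_{\mathrm{E2E}}=\frac{z_{\mathrm{L}}\phi_{\mathrm{TR}}}{\tilde{z}_{\mathrm{T}}\tilde{z}_{\mathrm{R}}-\phi_{\mathrm{TR}}^{2}},\qquad f(\mathbf{z}_{\mathrm{RIS}})=|h_{\mathrm{E2E}}|^{2},$$ at any $\mathbf{z}_{\mathrm{RIS,Im}}$ where $\mathbf{Z}_{\mathrm{SE}}$ is invertible and $\tilde{z}_{\mathrm{T}}\tilde{z}_{\mathrm{R}}-\phi_{\mathrm{TR}}^{2}\neq 0$. Then the gradient of $f$, regarded as a real-valued function of $\mathbf{z}_{\mathrm{RIS,Im}}\in\mathbb{R}^N$, is $$\nabla_{\mathbf{z}_{\mathrm{RIS,Im}}}f(\mathbf{z}_{\mathrm{RIS}})=2\,\mathfrak{I}\bigl(h_{\mathrm{E2E}}\,\mathrm{vec}_{d}(\mathbf{E}^{*})\bigr),$$ where $$\mathbf{E}=z_{\mathrm{L}}a\,\mathbf{Z}_{\mathrm{SE}}^{-1}\Bigl(\bigl(2a\phi_{\mathrm{TR}}^{2}+1\bigr)\mathbf{z}_{\mathrm{SR}}\mathbf{z}_{\mathrm{TS}}-a\phi_{\mathrm{TR}}\tilde{z}_{\mathrm{R}}\,\mathbf{z}_{\mathrm{ST}}\mathbf{z}_{\mathrm{TS}}-a\phi_{\mathrm{TR}}\tilde{z}_{\mathrm{T}}\,\mathbf{z}_{\mathrm{SR}}\mathbf{z}_{\mathrm{RS}}\Bigr)\mathbf{Z}_{\mathrm{SE}}^{-1}.$$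
   Context: This is the end-to-end transfer function of a SISO link assisted by a reconfigurable intelligent surface (RIS) with $N$ elements modeled as mutually coupled thin wire dipoles loaded by tunable impedances $\mathbf{z}_{\mathrm{RIS}}$. Here $\mathbf{Z}_{\mathrm{SS}}$ is the mutual impedance matrix among RIS elements, $z_{\mathrm{G}}$ the generator internal impedance, $z_{\mathrm{L}}$ the receiver load impedance, $z_{\mathrm{TT}},z_{\mathrm{RR}}$ the self impedances of the transmit and receive antennas, $z_{\mathrm{TR}}=z_{\mathrm{RT}}$ their mutual impedance, $\mathbf{z}_{\mathrm{TS}},\mathbf{z}_{\mathrm{RS}}$ (row vectors) the mutual impedances between the transmit/receive antenna and the RIS elements, and $\mathbf{z}_{\mathrm{ST}},\mathbf{z}_{\mathrm{SR}}$ (column vectors) the mutual impedances between the RIS elements and the transmit/receive antenna. $j$ is the imaginary unit, $\mathbf{1}$ is the all-ones vector, $(\cdot)^*$ denotes entrywise complex conjugation, $\mathfrak{I}(\cdot)$ is the entrywise imaginary part, $\mathrm{diag}(\mathbf{x})$ is the diagonal matrix with diagonal $\mathbf{x}$, and $\mathrm{vec}_d(\mathbf{X})$ is the column vector of diagonal entries of the square matrix $\mathbf{X}$. *)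

From HB Require Import structures.
From mathcomp Require Import all_boot all_order all_algebra.
From mathcomp Require Import all_classical all_reals all_analysis.
From mathcomp Require Import complex.
Set Implicit Arguments. Unset Strict Implicit. Unset Printing Implicit Defensive.
Import Order.TTheory GRing.Theory Num.Theory.
Local Open Scope ring_scope.
Local Open Scope complex_scope.

Section Defs.
Variable R : realType.
Local Notation C := R[i].

Definition sqmod (h : C) : R := complex.Re h ^+ 2 + complex.Im h ^+ 2.

Definition zRIS (N : nat) (R0 : R) (x : 'rV[R]_N) : 'cV[C]_N :=
  \col_i (R0%:C + 'i * (x 0 i)%:C).

Definition ZSE (N : nat) (ZSS : 'M[C]_N) (R0 : R) (x : 'rV[R]_N) : 'M[C]_N :=
  ZSS + diag_mx (zRIS R0 x)^T.

Definition phi (N : nat) (Zinv : 'M[C]_N) (zKL : C) (zKS : 'rV[C]_N)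
  (zSL : 'cV[C]_N) : C := zKL - (zKS *m Zinv *m zSL) 0 0.

Definition hE2E (N : nat) (ZSS : 'M[C]_N) (zG zL zTT zRR zTR : C)
  (zTS zRS : 'rV[C]_N) (zST zSR : 'cV[C]_N) (R0 : R) (x : 'rV[R]_N) : C :=
  let Zi := invmx (ZSE ZSS R0 x) in
  let pTT := phi Zi zTT zTS zST in
  let pRR := phi Zi zRR zRS zSR in
  let pTR := phi Zi zTR zTS zSR in
  let zT := zG + pTT in
  let zR := zL + pRR in
  zL * pTR / (zT * zR - pTR ^+ 2).

Definition fE2E (N : nat) (ZSS : 'M[C]_N) (zG zL zTT zRR zTR : C)
  (zTS zRS : 'rV[C]_N) (zST zSR : 'cV[C]_N) (R0 : R) (x : 'rV[R]_N) : R :=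
  sqmod (hE2E ZSS zG zL zTT zRR zTR zTS zRS zST zSR R0 x).
End Defs.

(* Along the coordinate direction e_j, Z_SE moves by the rank-one matrix j t e_j e_j^T, so by
   Sherman-Morrison Z_SE^-1 moves by -s(t) Z_SE^-1 e_j e_j^T Z_SE^-1 with s(t) = jt / (1 + jt d)
   and s'(0) = j.  Every phi_KL is therefore affine in s(t), h_E2E is a fixed rational function of
   the three phi's, and the chain rule gives h' = j E_jj.  Finally d|h|^2 = 2 Re (h conj h') =
   2 Im (h conj E_jj). *)
From HB Require Import structures.
From mathcomp Require Import all_boot all_order all_algebra.
From mathcomp Require Import all_classical all_reals all_analysis.
From mathcomp Require Import complex.
From mathcomp Require Import ring lra.
Import Order.TTheory GRing.Theory Num.Theory.
Import numFieldNormedType.Exports.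
Local Open Scope ring_scope.
Local Open Scope complex_scope.
Set Implicit Arguments.
Unset Strict Implicit.

Section MatrixUnitSandwich.
Variables (F : comPzRingType) (N : nat).
Implicit Types (A B : 'M[F]_N) (j : 'I_N).

Lemma mul_col_rowE (P : 'cV[F]_N) (Q : 'rV[F]_N) i k : (P *m Q) i k = P i 0 * Q 0 k.
Proof. by rewrite mxE big_ord1. Qed.

Lemma mul_sandwich_col_row_diag A B (P : 'cV[F]_N) (Q : 'rV[F]_N) i :
  (A *m (P *m Q) *m B) i i = (A *m P) i 0 * (Q *m B) 0 i.
Proof. by rewrite mulmxA -(mulmxA _ Q) mul_col_rowE. Qed.

Lemma sandwich_lincomb_diag A B (P P' : 'cV[F]_N) (Q Q' : 'rV[F]_N) (al be ga : F) i :
  (A *m (al *: (P *m Q) - be *: (P' *m Q) - ga *: (P *m Q')) *m B) i i =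
  al * ((A *m P) i 0 * (Q *m B) 0 i) - be * ((A *m P') i 0 * (Q *m B) 0 i)
  - ga * ((A *m P) i 0 * (Q' *m B) 0 i).
Proof.
rewrite !mulmxBr !mulmxBl -!scalemxAr -!scalemxAl -!mul_sandwich_col_row_diag.
by move: (A *m (P *m Q) *m B) (A *m (P' *m Q) *m B) (A *m (P *m Q') *m B) => ? ? ?; rewrite !mxE.
Qed.

Lemma form_delta_mx (u : 'rV[F]_N) A B (v : 'cV[F]_N) j :
  (u *m (A *m delta_mx j j *m B) *m v) 0 0 = (u *m A) 0 j * (B *m v) j 0.
Proof.
rewrite -(mul_delta_mx (0 : 'I_1) j j) !mulmxA -colE -!mulmxA.
rewrite mxE big_ord1 mxE; congr (_ * _).
by rewrite mulmxA -rowE -row_mul mxE.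
Qed.

Lemma delta_mx_sandwich A j : delta_mx j j *m A *m delta_mx j j = A j j *: delta_mx j j.
Proof.
rewrite -(mul_delta_mx (0 : 'I_1) j j) !mulmxA -(mulmxA (delta_mx j 0)) -rowE.
rewrite -(mulmxA (delta_mx j 0)) -colE [col _ _]mx11_scalar !mxE.
by rewrite mul_mx_scalar scalemxAl.
Qed.
End MatrixUnitSandwich.

Lemma invmx_add_delta (F : fieldType) N (Z : 'M[F]_N) j (c : F) :
  Z \in unitmx -> 1 + c * invmx Z j j != 0 ->
  invmx (Z + c *: delta_mx j j) =
  invmx Z - (c / (1 + c * invmx Z j j)) *: (invmx Z *m delta_mx j j *m invmx Z).
Proof.
move=> Zu nz; set Zi := invmx Z; set s := c / (1 + c * Zi j j).
have cs : c * (s * Zi j j) = c - s by rewrite /s; field.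
have right_inv : (Z + c *: delta_mx j j) *m (Zi - s *: (Zi *m delta_mx j j *m Zi)) = 1%:M.
  rewrite mulmxDl !mulmxBr mulmxV // -!scalemxAl -!scalemxAr !mulmxA mulmxV // mul1mx.
  rewrite delta_mx_sandwich -scalemxAl !scalerA cs scalerBl.
  by rewrite opprB [c *: _ + _]addrC !subrK.
have [Zcu _] := mulmx1_unit right_inv.
by rewrite -[LHS]mulmx1 -right_inv mulmxA mulVmx // mul1mx.
Qed.

Section ComplexParts.
Variable R : rcfType.
Local Notation C := R[i].
Local Notation Re := (@complex.Re R).
Local Notation Im := (@complex.Im R).
Implicit Types a b : C.

Lemma Re_add a b : Re (a + b) = Re a + Re b. Proof. by case: a; case: b. Qed.
Lemma Im_add a b : Im (a + b) = Im a + Im b. Proof. by case: a; case: b. Qed.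
Lemma Re_opp a : Re (- a) = - Re a. Proof. by case: a. Qed.
Lemma Im_opp a : Im (- a) = - Im a. Proof. by case: a. Qed.
Lemma Re_mul a b : Re (a * b) = Re a * Re b - Im a * Im b.
Proof. by case: a; case: b. Qed.
Lemma Im_mul a b : Im (a * b) = Re a * Im b + Im a * Re b.
Proof. by case: a => ? ?; case: b => ? ? /=; rewrite addrC. Qed.
Lemma Re_mul_conj_mulI (a b : C) : Re (a * ('i * b)^*) = Im (a * b^*).
Proof. by case: a => ? ?; case: b => ? ? /=; ring. Qed.

End ComplexParts.

Section ComplexDerivative.
Variable R : realType.
Local Notation C := R[i].
Local Notation Re := (@complex.Re R).
Local Notation Im := (@complex.Im R).
Implicit Types (x v : R) (c d : R -> C) (dc dd : C).

Lemma Re_inv (a : C) : Re a^-1 = Re a / sqmod a. Proof. by case: a. Qed.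
Lemma Im_inv (a : C) : Im a^-1 = - (Im a / sqmod a). Proof. by case: a. Qed.

Lemma sqmod_eq0 (a : C) : (sqmod a == 0) = (a == 0).
Proof.
case: a => p q; rewrite /sqmod paddr_eq0 ?sqr_ge0 // !sqrf_eq0.
by rewrite eq_complex.
Qed.

Definition is_deriveC x v c dc :=
  is_derive x v (fun t => Re (c t)) (Re dc) /\ is_derive x v (fun t => Im (c t)) (Im dc).

Lemma is_deriveC_eq x v c dc dc' : is_deriveC x v c dc -> dc = dc' ->
  is_deriveC x v c dc'.
Proof. by move=> ? <-. Qed.

Lemma is_deriveC_cst x v (k : C) : is_deriveC x v (fun=> k) 0.
Proof. by split; exact: is_derive_cst. Qed.

Lemma is_deriveC_real x v : is_deriveC x v (fun t => t%:C) v%:C.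
Proof. by split; [exact: is_derive_id | exact: is_derive_cst]. Qed.

Lemma is_deriveCD x v c d dc dd : is_deriveC x v c dc -> is_deriveC x v d dd ->
  is_deriveC x v (fun t => c t + d t) (dc + dd).
Proof.
move=> [Rc Ic] [Rd Id]; split.
  rewrite (_ : (fun t => _) = (fun t => Re (c t)) + (fun t => Re (d t))).
    by rewrite Re_add; exact: is_deriveD.
  by apply/funext => t; rewrite Re_add.
rewrite (_ : (fun t => _) = (fun t => Im (c t)) + (fun t => Im (d t))).
  by rewrite Im_add; exact: is_deriveD.
by apply/funext => t; rewrite Im_add.
Qed.

Lemma is_deriveCN x v c dc : is_deriveC x v c dc ->
  is_deriveC x v (fun t => - c t) (- dc).
Proof.
move=> [Rc Ic]; split.
  rewrite (_ : (fun t => _) = - (fun t => Re (c t))).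
    by rewrite Re_opp; exact: is_deriveN.
  by apply/funext => t; rewrite Re_opp.
rewrite (_ : (fun t => _) = - (fun t => Im (c t))).
  by rewrite Im_opp; exact: is_deriveN.
by apply/funext => t; rewrite Im_opp.
Qed.

Lemma is_deriveCM x v c d dc dd : is_deriveC x v c dc -> is_deriveC x v d dd ->
  is_deriveC x v (fun t => c t * d t) (dc * d x + c x * dd).
Proof.
move=> [Rc Ic] [Rd Id]; split.
  rewrite (_ : (fun t => _) = (fun t => Re (c t)) * (fun t => Re (d t))
                            - (fun t => Im (c t)) * (fun t => Im (d t))).
    by apply: is_derive_eq; rewrite Re_add !Re_mul /GRing.scale /=; ring.
  by apply/funext => t; rewrite Re_mul.
rewrite (_ : (fun t => _) = (fun t => Re (c t)) * (fun t => Im (d t))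
                          + (fun t => Im (c t)) * (fun t => Re (d t))).
  by apply: is_derive_eq; rewrite Im_add !Im_mul /GRing.scale /=; ring.
by apply/funext => t; rewrite Im_mul.
Qed.

Lemma is_deriveC_affine x v c dc (k0 k : C) : is_deriveC x v c dc ->
  is_deriveC x v (fun t => k0 + c t * k) (dc * k).
Proof.
move=> dc_c.
apply: is_deriveC_eq (is_deriveCD (is_deriveC_cst x v k0) (is_deriveCM dc_c (is_deriveC_cst x v k))) _.
by rewrite mulr0 !addr0 add0r.
Qed.

Lemma is_derive_sqmod x v c dc : is_deriveC x v c dc ->
  is_derive x v (fun t => sqmod (c t)) (2 * Re (c x * dc^*)).
Proof.
move=> [Rc Ic].
rewrite (_ : (fun t => _) = (fun t => Re (c t)) * (fun t => Re (c t))
                          + (fun t => Im (c t)) * (fun t => Im (c t))).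
  apply: is_derive_eq; rewrite /GRing.scale /=.
  by case: (c x) => a b; case: dc Rc Ic => p q _ _ /=; ring.
by apply/funext => t; rewrite /sqmod !expr2.
Qed.

Lemma is_deriveCV x v c dc : is_deriveC x v c dc -> c x != 0 ->
  is_deriveC x v (fun t => (c t)^-1) (- (dc / c x ^+ 2)).
Proof.
move=> dc_c cx0; have [Rc Ic] := dc_c.
have n0 : sqmod (c x) != 0 by rewrite sqmod_eq0.
have dVn := is_deriveV (f := fun t => sqmod (c t)) n0 (is_derive_sqmod dc_c).
move: n0; rewrite /sqmod => n0.
have sqmod_sqr (a b : R) :
  (a * a - b * b) ^+ 2 + (a * b + b * a) ^+ 2 = (a ^+ 2 + b ^+ 2) ^+ 2 by ring.
split.
  rewrite (_ : (fun t => _) = (fun t => Re (c t)) * (fun t => (sqmod (c t))^-1)).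
    apply: is_derive_eq; rewrite /GRing.scale /sqmod /=; clear -n0 sqmod_sqr.
    by move: n0; case: (c x) => a b; case: dc => p q /= n0; rewrite sqmod_sqr; field.
  by apply/funext => t; rewrite Re_inv.
rewrite (_ : (fun t => _) = - ((fun t => Im (c t)) * (fun t => (sqmod (c t))^-1))).
  apply: is_derive_eq; rewrite /GRing.scale /sqmod /=; clear -n0 sqmod_sqr.
  by move: n0; case: (c x) => a b; case: dc => p q /= n0; rewrite sqmod_sqr; field.
by apply/funext => t; rewrite Im_inv.
Qed.

Lemma is_deriveC_mobius_at_root x v c dc (d : C) : is_deriveC x v c dc -> c x = 0 ->
  is_deriveC x v (fun t => c t / (1 + c t * d)) dc.
Proof.
move=> dc_c cx0.
have dden := is_deriveC_affine 1 d dc_c.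
have den0 : (fun t => 1 + c t * d) x != 0 by rewrite /= cx0 mul0r addr0 oner_neq0.
apply: is_deriveC_eq (is_deriveCM dc_c (is_deriveCV dden den0)) _.
by rewrite cx0 mul0r addr0 invr1 mulr1 mul0r addr0.
Qed.

Lemma near0_1_add_ti_mul_neq0 (d : C) : \forall t \near (0 : R), 1 + t%:C * 'i * d != 0.
Proof.
have r_gt0 : 0 < (`|Im d| + 1)^-1 :> R by rewrite invr_gt0 ltr_wpDl.
near=> t; apply/eqP => /(congr1 Re); rewrite Re_add !Re_mul /= => Re0.
have t_small : `|t| * (`|Im d| + 1) < 1.
  by rewrite -ltr_pdivlMr ?ltr_wpDl // div1r; near: t; exact: nbhs0_lt.
have : t * Im d <= `|t| * `|Im d| by rewrite -normrM ler_norm.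
move: t_small; rewrite mulrDr mulr1; have := normr_ge0 t; lra.
Unshelve. all: by end_near.
Qed.
End ComplexDerivative.

Section TransferFunction.
Variable R : realType.
Local Notation C := R[i].

Lemma ZSE_shift N (ZSS : 'M[C]_N) R0 (x : 'rV[R]_N) j (t : R) :
  ZSE ZSS R0 (x + t *: delta_mx 0 j) = ZSE ZSS R0 x + (t%:C * 'i) *: delta_mx j j.
Proof.
apply/matrixP => k l; rewrite /ZSE /zRIS !mxE -addrA; congr (_ + _).
have [<-|kl] := eqVneq k l; last first.
  rewrite !mulr0n add0r; have [kj|_] := eqVneq k j; last by rewrite mulr0.
  by rewrite -kj eq_sym (negbTE kl) mulr0.
rewrite !eqxx andbb !mulr1n; case: (k == j); rewrite ?mulr1 ?mulr0 ?addr0 //.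
by rewrite raddfD mulrDr addrA [_ * t%:C]mulrC.
Qed.

Lemma phi_rank_one_update N (Zi : 'M[C]_N) (s zKL : C) zKS zSL j :
  phi (Zi - s *: (Zi *m delta_mx j j *m Zi)) zKL zKS zSL =
  phi Zi zKL zKS zSL + s * ((zKS *m Zi) 0 j * (Zi *m zSL) j 0).
Proof.
rewrite /phi mulmxBr mulmxBl -scalemxAr -scalemxAl -form_delta_mx.
move: (zKS *m Zi *m zSL) (zKS *m _ *m zSL) => A B.
by rewrite !mxE opprB addrA addrAC.
Qed.

Definition e2e_ratio (zL pTR zT zR : C) : C := zL * pTR / (zT * zR - pTR ^+ 2).

Lemma is_deriveC_e2e_ratio x v (zL : C) P T Q dP dT dQ :
  T x * Q x - P x ^+ 2 != 0 ->
  is_deriveC x v P dP -> is_deriveC x v T dT -> is_deriveC x v Q dQ ->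
  let a := (T x * Q x - P x ^+ 2)^-1 in
  is_deriveC x v (fun t => e2e_ratio zL (P t) (T t) (Q t))
    (zL * (a * dP - a ^+ 2 * P x * (dT * Q x + T x * dQ - 2 * P x * dP))).
Proof.
move=> D0 dP_ dT_ dQ_ a.
have dD := is_deriveCD (is_deriveCM dT_ dQ_) (is_deriveCN (is_deriveCM dP_ dP_)).
apply: is_deriveC_eq
  (is_deriveCM (is_deriveCM (is_deriveC_cst x v zL) dP_) (is_deriveCV dD D0)) _.
by rewrite /a; field.
Qed.
End TransferFunction.

Theorem lemma1 (R : realType) (N : nat) (ZSS : 'M[R[i]]_N)
  (zG zL zTT zRR zTR : R[i]) (zTS zRS : 'rV[R[i]]_N) (zST zSR : 'cV[R[i]]_N)
  (R0 : R) (x : 'rV[R]_N) :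
  (0 < N)%N -> 0 <= R0 ->
  ZSE ZSS R0 x \in unitmx ->
  let Zi := invmx (ZSE ZSS R0 x) in
  let pTT := phi Zi zTT zTS zST in
  let pRR := phi Zi zRR zRS zSR in
  let pTR := phi Zi zTR zTS zSR in
  let zT := zG + pTT in
  let zR := zL + pRR in
  zT * zR - pTR ^+ 2 != 0 ->
  let a := (zT * zR - pTR ^+ 2)^-1 in
  let h := hE2E ZSS zG zL zTT zRR zTR zTS zRS zST zSR R0 x in
  let E := (zL * a) *: (Zi *m
             ((2 * a * pTR ^+ 2 + 1) *: (zSR *m zTS)
              - (a * pTR * zR) *: (zST *m zTS)
              - (a * pTR * zT) *: (zSR *m zRS)) *m Zi) in
  forall j : 'I_N,
    is_derive (0 : R) (1 : R)
      (fun t : R => fE2E ZSS zG zL zTT zRR zTR zTS zRS zST zSR R0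
                      (x + t *: delta_mx 0 j))
      (2 * complex.Im (h * (E j j)^*)).
Proof.
(* [0 < N] and [0 <= R0] are physical side conditions: the identity holds without them. *)
move=> _ _ Zu Zi pTT pRR pTR zT zR D0 a h E j.
pose uT := (zTS *m Zi) 0 j; pose uR := (zRS *m Zi) 0 j.
pose vT := (Zi *m zST) j 0; pose vR := (Zi *m zSR) j 0.
pose s t : R[i] := t%:C * 'i / (1 + t%:C * 'i * Zi j j).
pose line (k0 k : R[i]) t := k0 + s t * k.
have s0 : s 0 = 0 by rewrite /s raddf0 !mul0r.
have f_line : \forall t \near 0, sqmod (e2e_ratio zL
    (line pTR (uT * vR) t) (line zT (uT * vT) t) (line zR (uR * vR) t)) =
    fE2E ZSS zG zL zTT zRR zTR zTS zRS zST zSR R0 (x + t *: delta_mx 0 j).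
  near=> t; have t_ok : 1 + t%:C * 'i * Zi j j != 0 by near: t; exact: near0_1_add_ti_mul_neq0.
  rewrite /fE2E /hE2E ZSE_shift invmx_add_delta // !phi_rank_one_update.
  by rewrite /line /zT /zR !addrA.
have ds : is_deriveC 0 1 s 'i.
  apply: is_deriveC_mobius_at_root; last by rewrite raddf0 mul0r.
  apply: is_deriveC_eq (is_deriveCM (is_deriveC_real 0 1) (is_deriveC_cst 0 1 'i)) _.
  by rewrite mulr0 addr0 mul1r.
have Ejj : E j j = zL * (a * (uT * vR)
                   - a ^+ 2 * pTR * (uT * vT * zR + zT * (uR * vR) - 2 * pTR * (uT * vR))).
  by rewrite /E [LHS]mxE sandwich_lincomb_diag /a /uT /uR /vT /vR; field.
have D0' : line zT (uT * vT) 0 * line zR (uR * vR) 0 - line pTR (uT * vR) 0 ^+ 2 != 0.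
  by rewrite /line s0 !mul0r !addr0.
have dline k0 k : is_deriveC 0 1 (line k0 k) ('i * k) := is_deriveC_affine k0 k ds.
apply: near_eq_is_derive f_line _.
apply: is_derive_eq (is_derive_sqmod (is_deriveC_e2e_ratio zL D0' (dline _ _) (dline _ _) (dline _ _))) _.
rewrite /line s0 !mul0r !addr0 -/a -Re_mul_conj_mulI Ejj.
by congr (2 * complex.Re (_ * _^*)); ring.
Unshelve. all: by end_near.
Qed.
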